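(* Let $k\ge 1$ and $m=k+1$. Consider the instance with jobs $1,\dots,k+1$, all of weight $1$, and machines $1,\dots,m$: each job $j\le k$ has processing time $1$ on machine $1$ and may not be assigned to any other machine; job $k+1$ has processing time $k^2$ on each machine $2,\dots,m$ and may not be assigned to machine $1$. Then every schedule has total completion time at least $k^2+k(k+1)/2>\tfrac32 k^2$, while the optimal value of (CP) on this instance is at most $k^2+k$. Consequently the ratio between the integral optimum and the optimum of (CP) is at least $3/2-O(1/k)$.
   Context: (CP) is the convex program: minimize $z$ subject to $z\ge \tfrac12 c^Tx+\tfrac12 x^TDx$, $z\ge c^Tx$, $\sum_{i}x_{ij}=1$ for all jobs $j$, $x\in[0,1]^{M\times J}$, with $x_{ij}=0$ whenever job $j$ may not be assigned to machine $i$. Here $c^Tx=\sum_i\sum_j w_jp_{ij}x_{ij}$ and $x^TDx=\sum_i\sum_j w_j\big(\sum_{j'\prec_i j}2p_{ij'}x_{ij'}+p_{ij}x_{ij}\big)x_{ij}$, where $\prec_i$ is Smith's order on machine $i$ (non-increasing $w_j/p_{ij}$, ties broken by job index). *)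

From Stdlib Require Import Reals Lra Arith.
Open Scope R_scope.

Fixpoint sum1 (n : nat) (f : nat -> R) : R :=
  match n with
  | O => 0
  | S n' => sum1 n' f + f (S n')
  end.

Definition smith_prec (w : nat -> R) (p : nat -> nat -> R) (i j' j : nat) : bool :=
  if Rlt_dec (w j / p i j) (w j' / p i j') then true
  else if Req_EM_T (w j / p i j) (w j' / p i j') then Nat.ltb j' j
  else false.

Definition cx (nJ nM : nat) (w : nat -> R) (p : nat -> nat -> R)
  (x : nat -> nat -> R) : R :=
  sum1 nM (fun i => sum1 nJ (fun j => w j * p i j * x i j)).

Definition xDx (nJ nM : nat) (w : nat -> R) (p : nat -> nat -> R)
  (x : nat -> nat -> R) : R :=
  sum1 nM (fun i => sum1 nJ (fun j =>
    w j * (sum1 nJ (fun j' => if smith_prec w p i j' j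
                              then 2 * p i j' * x i j' else 0)
           + p i j * x i j) * x i j)).

Definition cp_feasible (nJ nM : nat) (w : nat -> R) (p : nat -> nat -> R)
  (allowed : nat -> nat -> Prop) (x : nat -> nat -> R) (z : R) : Prop :=
  (forall i j, (1 <= i <= nM)%nat -> (1 <= j <= nJ)%nat -> 0 <= x i j <= 1) /\
  (forall i j, (1 <= i <= nM)%nat -> (1 <= j <= nJ)%nat -> ~ allowed i j -> x i j = 0) /\
  (forall j, (1 <= j <= nJ)%nat -> sum1 nM (fun i => x i j) = 1) /\
  z >= / 2 * cx nJ nM w p x + / 2 * xDx nJ nM w p x /\
  z >= cx nJ nM w p x.

(* A (non-preemptive) schedule: job j runs on machine a j during
   [s j, s j + p (a j) j); jobs on the same machine do not overlap. *)
Definition valid_schedule (nJ nM : nat) (p : nat -> nat -> R)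
  (allowed : nat -> nat -> Prop) (a : nat -> nat) (s : nat -> R) : Prop :=
  (forall j, (1 <= j <= nJ)%nat -> (1 <= a j <= nM)%nat /\ allowed (a j) j /\ 0 <= s j) /\
  (forall j j', (1 <= j <= nJ)%nat -> (1 <= j' <= nJ)%nat -> j <> j' -> a j = a j' ->
     s j + p (a j) j <= s j' \/ s j' + p (a j') j' <= s j).

Definition twct (nJ : nat) (w : nat -> R) (p : nat -> nat -> R)
  (a : nat -> nat) (s : nat -> R) : R :=
  sum1 nJ (fun j => w j * (s j + p (a j) j)).

Definition inst_w (k : nat) (j : nat) : R := 1.
(* p i j = 1 for j <= k (meaningful on machine 1 only), k^2 for job k+1
   (meaningful on machines 2..m only); values on forbidden pairs are
   irrelevant since such pairs can never be used. *)
Definition inst_p (k : nat) (i j : nat) : R :=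
  if Nat.leb j k then 1 else INR k ^ 2.
Definition inst_allowed (k : nat) (i j : nat) : Prop :=
  ((1 <= j <= k)%nat /\ i = 1%nat) \/ (j = S k /\ (2 <= i <= S k)%nat).

(* Lower bound: the k unit jobs share machine 1, so their start times are pairwise
   at least 1 apart and sum to at least k(k-1)/2, while the long job finishes no
   earlier than k^2.  Upper bound: spreading the long job evenly, 1/k on each of
   the k machines 2..k+1, costs only k in both c^T x and x^T D x, whereas the unit
   jobs on machine 1 contribute k^2 in x^T D x (the sum of the first k odd
   numbers) and k in c^T x. *)
From Stdlib Require Import Reals Lra Lia Arith List.
Open Scope R_scope.

Lemma sum1_ext n f g :
  (forall i, (1 <= i <= n)%nat -> f i = g i) -> sum1 n f = sum1 n g.
Proof.
  induction n as [|n IH]; intros H; cbn [sum1]; [reflexivity|].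
  rewrite IH by (intros; apply H; lia). rewrite H by lia. reflexivity.
Qed.

Lemma sum1_const n c : sum1 n (fun _ => c) = INR n * c.
Proof. induction n as [|n IH]; cbn [sum1]; [simpl; ring|]. rewrite IH, S_INR; ring. Qed.

Lemma sum1_eq0 n f : (forall i, (1 <= i <= n)%nat -> f i = 0) -> sum1 n f = 0.
Proof. intros H. rewrite (sum1_ext n f (fun _ => 0)), sum1_const by auto; ring. Qed.

Lemma sum1_add n f g : sum1 n (fun i => f i + g i) = sum1 n f + sum1 n g.
Proof. induction n as [|n IH]; cbn [sum1]; [ring|]. rewrite IH; ring. Qed.

Lemma sum1_Sl n f : sum1 (S n) f = f 1%nat + sum1 n (fun i => f (S i)).
Proof.
  induction n as [|n IH]; cbn [sum1]; [ring|].
  change (sum1 (S n) f + f (S (S n)) = f 1%nat + (sum1 n (fun i => f (S i)) + f (S (S n)))).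
  rewrite IH; ring.
Qed.

Lemma sum1_ltb n j c :
  sum1 n (fun j' => if Nat.ltb j' j then c else 0) = INR (Nat.min n (j - 1)) * c.
Proof.
  induction n as [|n IH]; cbn [sum1]; [simpl; ring|].
  rewrite IH. destruct (Nat.ltb_spec (S n) j).
  - rewrite (Nat.min_l (S n)), Nat.min_l, S_INR by lia; ring.
  - rewrite !Nat.min_r by lia; ring.
Qed.

Lemma sum1_odd n : sum1 n (fun j => 2 * INR (j - 1) + 1) = INR n ^ 2.
Proof.
  induction n as [|n IH]; cbn [sum1]; [simpl; ring|].
  rewrite IH. replace (S n - 1)%nat with n by lia. rewrite S_INR; ring.
Qed.

Definition sumL (f : nat -> R) (l : list nat) : R := fold_right (fun j acc => f j + acc) 0 l.

Lemma sumL_app f l1 l2 : sumL f (l1 ++ l2) = sumL f l1 + sumL f l2.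
Proof. induction l1 as [|j l1 IH]; simpl; [ring|]. rewrite IH; ring. Qed.

Lemma sum1_sumL n f : sum1 n f = sumL f (seq 1 n).
Proof.
  induction n as [|n IH]; [reflexivity|].
  rewrite seq_S, sumL_app; cbn [sum1]. rewrite IH. simpl.
  replace (1 + n)%nat with (S n) by lia; ring.
Qed.

Lemma exists_argmax (f : nat -> R) l :
  l <> nil -> exists m, In m l /\ forall j, In j l -> f j <= f m.
Proof.
  induction l as [|a l IH]; intros Hl; [congruence|].
  destruct l as [|b l'].
  - exists a; split; [left; reflexivity|]. intros j [<-|[]]; lra.
  - destruct IH as [m [Hm Hmax]]; [discriminate|].
    destruct (Rle_dec (f a) (f m)).
    + exists m; split; [right; exact Hm|]. intros j [<-|Hj]; auto.
    + exists a; split; [left; reflexivity|].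
      intros j [<-|Hj]; [lra|]. specialize (Hmax j Hj); lra.
Qed.

Section SpacedStarts.

Variables (s : nat -> R) (d : R).

Definition spaced (l : list nat) : Prop :=
  NoDup l /\ (forall j, In j l -> 0 <= s j) /\
  (forall j j', In j l -> In j' l -> j <> j' -> s j + d <= s j' \/ s j' + d <= s j).

Lemma spaced_remove l1 m l2 : spaced (l1 ++ m :: l2) -> spaced (l1 ++ l2).
Proof.
  intros [Hnd [Hpos Hsep]].
  assert (Hin : forall j, In j (l1 ++ l2) -> In j (l1 ++ m :: l2)).
  { intros j Hj. apply in_app_or in Hj. apply in_or_app. simpl. tauto. }
  split; [eapply NoDup_remove_1; eauto|].
  split; [intros j Hj; apply Hpos, Hin, Hj|].
  intros j j' Hj Hj' Hne. apply Hsep; auto.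
Qed.

Lemma spaced_max_ge l m :
  spaced l -> In m l -> (forall j, In j l -> s j <= s m) ->
  s m >= d * (INR (length l) - 1).
Proof.
  remember (length l) as n eqn:Hn. revert l m Hn.
  induction n as [|n IH]; intros l m Hn Hl Hm Hmax.
  { destruct l; [contradiction|discriminate]. }
  destruct (in_split m l Hm) as [l1 [l2 ->]].
  assert (Hlen : length (l1 ++ l2) = n) by (rewrite length_app in *; simpl in Hn; lia).
  destruct n as [|n].
  { destruct Hl as [_ [Hpos _]]. specialize (Hpos m Hm). simpl. lra. }
  destruct (exists_argmax s (l1 ++ l2)) as [m' [Hm' Hmax']].
  { intros E. rewrite E in Hlen. discriminate. }
  assert (Hnext := IH _ _ (eq_sym Hlen) (spaced_remove _ _ _ Hl) Hm' Hmax').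
  assert (Hin : In m' (l1 ++ m :: l2)).
  { apply in_app_or in Hm'. apply in_or_app. simpl. tauto. }
  destruct Hl as [Hnd [_ Hsep]].
  assert (Hne : m' <> m) by (intros ->; eapply NoDup_remove_2; eauto).
  specialize (Hmax m' Hin). rewrite S_INR.
  destruct (Hsep m' m Hin Hm Hne); nra.
Qed.

Lemma spaced_sum_ge l :
  spaced l -> sumL s l >= d * INR (length l) * (INR (length l) - 1) / 2.
Proof.
  remember (length l) as n eqn:Hn. revert l Hn.
  induction n as [|n IH]; intros l Hn Hl.
  { destruct l; [simpl; lra|discriminate]. }
  destruct (exists_argmax s l) as [m [Hm Hmax]]; [destruct l; [discriminate|congruence]|].
  assert (Htop := spaced_max_ge l m Hl Hm Hmax).
  destruct (in_split m l Hm) as [l1 [l2 ->]].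
  assert (Hlen : length (l1 ++ l2) = n) by (rewrite length_app in *; simpl in Hn; lia).
  assert (Hrest := IH _ (eq_sym Hlen) (spaced_remove _ _ _ Hl)).
  assert (Hsum : sumL s (l1 ++ m :: l2) = sumL s (l1 ++ l2) + s m)
    by (rewrite !sumL_app; simpl; ring).
  rewrite <- Hn, S_INR in *. rewrite Hsum. nra.
Qed.

End SpacedStarts.

Lemma smith_prec_tie w p i j' j :
  w j / p i j = w j' / p i j' -> smith_prec w p i j' j = Nat.ltb j' j.
Proof.
  intros Heq. unfold smith_prec.
  destruct (Rlt_dec _ _); [lra|].
  destruct (Req_EM_T _ _); [reflexivity|lra].
Qed.

Lemma smith_prec_irrefl w p i j : smith_prec w p i j j = false.
Proof. rewrite smith_prec_tie by reflexivity. apply Nat.ltb_irrefl. Qed.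

Lemma inst_p_short k i j : (j <= k)%nat -> inst_p k i j = 1.
Proof. intros Hj. unfold inst_p. destruct (Nat.leb_spec j k); [reflexivity|lia]. Qed.

Lemma inst_p_long k i : inst_p k i (S k) = INR k ^ 2.
Proof. unfold inst_p. destruct (Nat.leb_spec (S k) k); [lia|reflexivity]. Qed.

Lemma inst_smith_prec_short k i j' j :
  (j' <= k)%nat -> (j <= k)%nat -> smith_prec (inst_w k) (inst_p k) i j' j = Nat.ltb j' j.
Proof. intros Hj' Hj. apply smith_prec_tie. rewrite !inst_p_short by lia. reflexivity. Qed.

Lemma schedule_twct_ge k (a : nat -> nat) (s : nat -> R) :
  valid_schedule (S k) (S k) (inst_p k) (inst_allowed k) a s ->
  twct (S k) (inst_w k) (inst_p k) a s >= INR k ^ 2 + INR k * (INR k + 1) / 2.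
Proof.
  intros [Hv Hdisj]. unfold twct, inst_w. cbn [sum1].
  rewrite (sum1_ext k _ (fun j => s j + 1))
    by (intros; rewrite inst_p_short by lia; ring).
  rewrite inst_p_long, sum1_add, sum1_const, sum1_sumL.
  assert (Hmachine1 : forall j, (1 <= j <= k)%nat -> a j = 1%nat).
  { intros j Hj. destruct (Hv j ltac:(lia)) as [_ [[[_ H]|[H _]] _]]; [exact H|lia]. }
  assert (Hspaced : spaced s 1 (seq 1 k)).
  { split; [apply seq_NoDup|split].
    - intros j Hj. apply in_seq in Hj. apply Hv; lia.
    - intros j j' Hj Hj' Hne. apply in_seq in Hj. apply in_seq in Hj'.
      rewrite <- (inst_p_short k (a j) j) at 1 by lia.
      rewrite <- (inst_p_short k (a j') j') at 1 by lia.
      apply Hdisj; try lia. rewrite !Hmachine1 by lia. reflexivity. }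
  assert (Hsum := spaced_sum_ge s 1 _ Hspaced).
  rewrite length_seq in Hsum.
  destruct (Hv (S k) ltac:(lia)) as [_ [_ Hlong]]. nra.
Qed.

Definition cp_witness (k : nat) (i j : nat) : R :=
  if Nat.leb j k then (if Nat.eqb i 1 then 1 else 0)
  else (if Nat.eqb i 1 then 0 else / INR k).

Section Witness.

Variable k : nat.
Hypothesis k_ge1 : (1 <= k)%nat.

Lemma INR_k_ge1 : 1 <= INR k.
Proof. apply (le_INR 1); lia. Qed.

Lemma witness_short_1 j : (1 <= j <= k)%nat -> cp_witness k 1 j = 1.
Proof. intros Hj. unfold cp_witness. destruct (Nat.leb_spec j k); [reflexivity|lia]. Qed.

Lemma witness_short_other i j : (1 <= j <= k)%nat -> (2 <= i)%nat -> cp_witness k i j = 0.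
Proof.
  intros Hj Hi. unfold cp_witness. destruct (Nat.leb_spec j k); [|lia].
  destruct (Nat.eqb_spec i 1); [lia|reflexivity].
Qed.

Lemma witness_long_1 : cp_witness k 1 (S k) = 0.
Proof. unfold cp_witness. destruct (Nat.leb_spec (S k) k); [lia|reflexivity]. Qed.

Lemma witness_long_other i : (2 <= i)%nat -> cp_witness k i (S k) = / INR k.
Proof.
  intros Hi. unfold cp_witness. destruct (Nat.leb_spec (S k) k); [lia|].
  destruct (Nat.eqb_spec i 1); [lia|reflexivity].
Qed.

Lemma witness_cx : cx (S k) (S k) (inst_w k) (inst_p k) (cp_witness k) = INR k ^ 2 + INR k.
Proof.
  pose proof INR_k_ge1.
  unfold cx, inst_w. rewrite sum1_Sl. cbn [sum1].
  rewrite witness_long_1, (sum1_ext k _ (fun _ => 1))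
    by (intros; rewrite witness_short_1, inst_p_short by lia; ring).
  rewrite sum1_const, (sum1_ext k _ (fun _ => INR k)).
  2:{ intros i Hi. cbn [sum1]. rewrite witness_long_other, inst_p_long by lia.
      rewrite sum1_eq0 by (intros; rewrite witness_short_other by lia; ring).
      field. lra. }
  rewrite !sum1_const. ring.
Qed.

Lemma witness_xDx : xDx (S k) (S k) (inst_w k) (inst_p k) (cp_witness k) = INR k ^ 2 + INR k.
Proof.
  pose proof INR_k_ge1.
  assert (Hif0 : forall (b : bool) (c : R), (if b then c * 0 else 0) = 0)
    by (intros []; intros; ring).
  unfold xDx. rewrite sum1_Sl. cbn [sum1].
  rewrite witness_long_1, (Rmult_0_r (inst_w k (S k) * _)), Rplus_0_r.
  (* on machine 1, unit job j waits for the j - 1 unit jobs before it in Smith's order *)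
  rewrite (sum1_ext k _ (fun j => 2 * INR (j - 1) + 1)).
  2:{ intros j Hj. rewrite (witness_short_1 j), (inst_p_short k 1 j), Hif0, Rplus_0_r by lia.
      rewrite (sum1_ext k _ (fun j' => if Nat.ltb j' j then 2 else 0)).
      2:{ intros j' Hj'. rewrite inst_smith_prec_short, witness_short_1, inst_p_short by lia.
          destruct (Nat.ltb j' j); ring. }
      rewrite sum1_ltb, Nat.min_r by lia. unfold inst_w. ring. }
  rewrite sum1_odd, (sum1_ext k _ (fun _ => 1)).
  2:{ intros i Hi. cbn [sum1].
      rewrite witness_long_other, smith_prec_irrefl, inst_p_long by lia.
      rewrite !sum1_eq0 by (intros; rewrite witness_short_other by lia; ring || apply Hif0).
      unfold inst_w. field. lra. }
  rewrite sum1_const. ring.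
Qed.

Lemma witness_feasible :
  cp_feasible (S k) (S k) (inst_w k) (inst_p k) (inst_allowed k) (cp_witness k) (INR k ^ 2 + INR k).
Proof.
  pose proof INR_k_ge1.
  split; [|split; [|split; [|split]]].
  - intros i j Hi Hj.
    destruct (Nat.eq_dec i 1) as [->|Hi1], (Nat.eq_dec j (S k)) as [->|Hjk].
    + rewrite witness_long_1; lra.
    + rewrite witness_short_1 by lia; lra.
    + rewrite witness_long_other by lia. split.
      * left; apply Rinv_0_lt_compat; lra.
      * rewrite <- Rinv_1. apply Rinv_le_contravar; lra.
    + rewrite witness_short_other by lia; lra.
  - intros i j Hi Hj Hna. unfold inst_allowed in Hna.
    destruct (Nat.eq_dec i 1) as [->|Hi1], (Nat.eq_dec j (S k)) as [->|Hjk].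
    + exact witness_long_1.
    + exfalso; apply Hna; left; lia.
    + exfalso; apply Hna; right; lia.
    + apply witness_short_other; lia.
  - intros j Hj. rewrite sum1_Sl. destruct (Nat.eq_dec j (S k)) as [->|Hjk].
    + rewrite witness_long_1, (sum1_ext k _ (fun _ => / INR k))
        by (intros; apply witness_long_other; lia).
      rewrite sum1_const. field. lra.
    + rewrite witness_short_1, sum1_eq0 by (intros; try apply witness_short_other; lia).
      ring.
  - rewrite witness_cx, witness_xDx. lra.
  - rewrite witness_cx. lra.
Qed.

End Witness.

Theorem mainTheorem4 :
  exists c : R, forall k : nat, (1 <= k)%nat ->
    let nJ := S k in let nM := S k in
    (forall (a : nat -> nat) (s : nat -> R),
        valid_schedule nJ nM (inst_p k) (inst_allowed k) a s ->
        twct nJ (inst_w k) (inst_p k) a s >= INR k ^ 2 + INR k * (INR k + 1) / 2) /\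
    INR k ^ 2 + INR k * (INR k + 1) / 2 > 3 / 2 * INR k ^ 2 /\
    (exists (x : nat -> nat -> R) (z : R),
        cp_feasible nJ nM (inst_w k) (inst_p k) (inst_allowed k) x z /\
        z <= INR k ^ 2 + INR k) /\
    (forall (a : nat -> nat) (s : nat -> R),
        valid_schedule nJ nM (inst_p k) (inst_allowed k) a s ->
        exists (x : nat -> nat -> R) (z : R),
          cp_feasible nJ nM (inst_w k) (inst_p k) (inst_allowed k) x z /\
          twct nJ (inst_w k) (inst_p k) a s >= (3 / 2 - c / INR k) * z).
Proof.
  exists 1. intros k Hk nJ nM. subst nJ nM.
  pose proof (INR_k_ge1 k Hk).
  split; [|split; [|split]].
  - apply schedule_twct_ge.
  - nra.
  - exists (cp_witness k), (INR k ^ 2 + INR k).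
    split; [apply witness_feasible; exact Hk|lra].
  - intros a s Hv. exists (cp_witness k), (INR k ^ 2 + INR k).
    split; [apply witness_feasible; exact Hk|].
    pose proof (schedule_twct_ge k a s Hv).
    replace ((3 / 2 - 1 / INR k) * (INR k ^ 2 + INR k))
      with (3 / 2 * INR k ^ 2 + INR k / 2 - 1) by (field; lra).
    nra.
Qed.
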